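(* Let $\mathcal{X}$ be a set, $\mathcal{Y}$ a finite set of labels, $n\ge1$, $\mathcal{F}$ a nonempty class of functions $\mathcal{X}\to\mathcal{Y}$, and let $T$ be the training procedure $T(\mathbf{x},\mathbf{y})=\arg\min_{f\in\mathcal{F}}\sum_{i=1}^n\mathbbm{1}_{f(x_i)\ne y_i}$ (any minimizer). Let $\mathcal{D}_{\mathrm{train}}$ be any distribution over $(\mathcal{X}\times\mathcal{Y})^n$ and $\eta>0$. Define $\mathsf{Train}=\Pr[f(x_i)=y_i]$ where $(\mathbf{x},\mathbf{y})\sim\mathcal{D}_{\mathrm{train}}$, $f=T(\mathbf{x},\mathbf{y})$ and $i$ is uniform on $\{1,\ldots,n\}$; and $\mathsf{Train}(\eta)=\Pr[\tilde f(x_i)=y_i]$ where $(\mathbf{x},\mathbf{y})\sim\mathcal{D}_{\mathrm{train}}$, each $\tilde y_i$ independently equals $y_i$ with probability $1-\eta$ and is uniform on $\mathcal{Y}$ otherwise, $\tilde f=T(\mathbf{x},\tilde{\mathbf{y}})$, and $i$ is uniform on $\{1,\ldots,n\}$. Then the robustness gap satisfies $$\big(\mathsf{Train}-\mathsf{Train}(\eta)\big)_+\le 2\eta.$$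
   Context: $x_+=\max(x,0)$. Accuracies are measured with respect to the original (uncorrupted) labels $y_i$. *)

From HB Require Import structures.
From mathcomp Require Import all_boot all_order all_algebra.
From mathcomp Require Import all_classical all_reals all_analysis.
Set Implicit Arguments. Unset Strict Implicit. Unset Printing Implicit Defensive.
Import Order.TTheory GRing.Theory Num.Theory.
Local Open Scope ring_scope.
Local Open Scope classical_set_scope.

Section Defs.
Variables (R : realType) (X : Type) (Y : finType) (n : nat).

Definition n_err (f : X -> Y) (x : 'I_n -> X) (y : 'I_n -> Y) : nat :=
  #|[set i : 'I_n | f (x i) != y i]|.

Definition is_ERM (F : set (X -> Y)) (T : ('I_n -> X) -> ('I_n -> Y) -> X -> Y) :=
  forall x y, F (T x y) /\ forall g, F g -> (n_err (T x y) x y <= n_err g x y)%N.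

Definition acc (f : X -> Y) (x : 'I_n -> X) (y : 'I_n -> Y) : R :=
  n%:R^-1 * \sum_(i < n) (f (x i) == y i)%:R.

(* law of the corrupted labels: independently, ytil_i = y_i w.p. 1-eta,
   uniform on Y w.p. eta *)
Definition noise_pmf (eta : R) (y : 'I_n -> Y) (yt : {ffun 'I_n -> Y}) : R :=
  \prod_(i < n) ((1 - eta) * (yt i == y i)%:R + eta / #|Y|%:R).

Definition xs (s : 'I_n -> X * Y) : 'I_n -> X := fun i => (s i).1.
Definition ys (s : 'I_n -> X * Y) : 'I_n -> Y := fun i => (s i).2.

Definition train_cond (T : ('I_n -> X) -> ('I_n -> Y) -> X -> Y)
  (s : 'I_n -> X * Y) : R :=
  acc (T (xs s) (ys s)) (xs s) (ys s).

(* conditional (on the sample s) accuracy, w.r.t. the ORIGINAL labels,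
   of the model trained on corrupted labels, averaged over the noise *)
Definition train_eta_cond (eta : R) (T : ('I_n -> X) -> ('I_n -> Y) -> X -> Y)
  (s : 'I_n -> X * Y) : R :=
  \sum_(yt : {ffun 'I_n -> Y})
     noise_pmf eta (ys s) yt * acc (T (xs s) yt) (xs s) (ys s).

End Defs.

(* Train and Train(eta): the sample is drawn as S w, w ~ P *)
Definition Train (R : realType) (X : Type) (Y : finType) (n : nat)
  (d : measure_display) (Omega : measurableType d) (P : probability Omega R)
  (S : Omega -> 'I_n -> X * Y) (T : ('I_n -> X) -> ('I_n -> Y) -> X -> Y)
  : \bar R :=
  (\int[P]_w (train_cond R T (S w))%:E)%E.

Definition Train_eta (R : realType) (X : Type) (Y : finType) (n : nat)
  (d : measure_display) (Omega : measurableType d) (P : probability Omega R)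
  (S : Omega -> 'I_n -> X * Y) (T : ('I_n -> X) -> ('I_n -> Y) -> X -> Y)
  (eta : R) : \bar R :=
  (\int[P]_w (train_eta_cond eta T (S w))%:E)%E.

From HB Require Import structures.
From mathcomp Require Import all_boot all_order all_algebra.
From mathcomp Require Import all_classical all_reals all_analysis.
From mathcomp Require Import lra zify.
Set Implicit Arguments. Unset Strict Implicit. Unset Printing Implicit Defensive.
Import Order.TTheory GRing.Theory Num.Theory.
Local Open Scope ring_scope.

(* Let f be trained on the clean labels y and f~ on the corrupted labels y~,
   and let d be the Hamming distance between y and y~.  Changing one label
   changes the error count of a fixed classifier by at most one, so
     err_y f~ <= err_y~ f~ + d <= err_y~ f + d <= err_y f + 2 d,
   the middle step being the minimality of f~ on (x, y~).  Each label is
   flipped with probability at most eta, so E d <= n eta and the accuracy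
   drops by at most 2 eta, sample by sample and hence after integrating over
   the sample. *)

Section Hamming.
Variables (I : finType) (Y : eqType).

Definition hamming (u v : I -> Y) : nat := #|[set i | u i != v i]|.

Lemma hammingC u v : hamming u v = hamming v u.
Proof. by apply: eq_card => i; rewrite !inE eq_sym. Qed.

Lemma hamming_triangle u v w : (hamming u w <= hamming u v + hamming v w)%N.
Proof.
apply: leq_trans (leq_card_setU _ _); apply: subset_leq_card.
by apply/fintype.subsetP => i; rewrite !inE; case: (eqVneq (u i) (v i)) => [->|].
Qed.

Lemma natr_hamming (R : pzSemiRingType) u v :
  (hamming u v)%:R = \sum_i (u i != v i)%:R :> R.
Proof.
rewrite /hamming -sum1_card natr_sum big_mkcond /=.
by apply: eq_bigr => i _; rewrite inE; case: ifP.
Qed.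

End Hamming.

Section ERM.
Variables (R : realType) (X : Type) (Y : finType) (n : nat).
Variables (F : set (X -> Y)) (T : ('I_n -> X) -> ('I_n -> Y) -> X -> Y).
Hypothesis ERM : is_ERM F T.

Lemma n_err_hamming (f : X -> Y) (x : 'I_n -> X) (y : 'I_n -> Y) :
  n_err f x y = hamming (f \o x) y.
Proof.
apply: eq_card => i; rewrite [RHS]inE.
by apply/idP/idP => [/set_mem|?]; last exact: mem_set.
Qed.

Lemma acc_n_err (f : X -> Y) (x : 'I_n -> X) (y : 'I_n -> Y) :
  acc R f x y = n%:R^-1 * (n%:R - (n_err f x y)%:R).
Proof.
rewrite /acc n_err_hamming natr_hamming -[in n%:R](card_ord n) -sumr_const.
rewrite -sumrB; congr (_ * _); apply: eq_bigr => i _.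
by case: (_ == _); rewrite ?subr0 ?subrr.
Qed.

Lemma acc_ge0 (f : X -> Y) (x : 'I_n -> X) (y : 'I_n -> Y) : 0 <= acc R f x y.
Proof. by rewrite mulr_ge0 ?invr_ge0 ?ler0n ?sumr_ge0. Qed.

Lemma n_err_ERM_relabel x (y yt : 'I_n -> Y) :
  (n_err (T x yt) x y <= n_err (T x y) x y + 2 * hamming yt y)%N.
Proof.
have [Fy _] := ERM x y; have [_ min_yt] := ERM x yt.
have := min_yt _ Fy; rewrite !n_err_hamming.
have := hamming_triangle (T x yt \o x) yt y.
have := hamming_triangle (T x y \o x) y yt.
rewrite (hammingC y yt); lia.
Qed.

Lemma acc_ERM_relabel_le x (y yt : 'I_n -> Y) :
  acc R (T x y) x y <= acc R (T x yt) x y + 2 * n%:R^-1 * (hamming yt y)%:R.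
Proof.
have := n_err_ERM_relabel x y yt; rewrite -(ler_nat R) natrD natrM.
have : 0 <= n%:R^-1 :> R by rewrite invr_ge0.
rewrite !acc_n_err; nra.
Qed.

End ERM.

Lemma sum_ffun_prod_marginal (R : comPzSemiRingType) (I J : finType)
    (p : I -> J -> R) (i0 : I) (h : J -> R) :
  (forall i, i != i0 -> \sum_j p i j = 1) ->
  \sum_(f : {ffun I -> J}) (\prod_i p i (f i)) * h (f i0) = \sum_j p i0 j * h j.
Proof.
move=> p_sum1; pose q i j := if i == i0 then p i j * h j else p i j.
transitivity (\sum_(f : {ffun I -> J}) \prod_i q i (f i)).
  apply: eq_bigr => f _; rewrite (bigD1 i0) //= [RHS](bigD1 i0) //= /q eqxx.
  by rewrite mulrAC; congr (_ * _); apply: eq_bigr => i /negbTE ->.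
rewrite -bigA_distr_bigA (bigD1 i0) //= [X in _ * X]big1 ?mulr1 => [|i i_neq0].
  by rewrite /q eqxx.
by rewrite /q (negbTE i_neq0); exact: p_sum1.
Qed.

Section LabelNoise.
Variables (R : realType) (Y : finType) (n : nat) (eta : R) (y : 'I_n -> Y).
Hypotheses (eta_ge0 : 0 <= eta) (eta_le1 : eta <= 1).

Definition label_noise i (j : Y) : R := (1 - eta) * (j == y i)%:R + eta / #|Y|%:R.

Lemma noise_pmfE (yt : {ffun 'I_n -> Y}) :
  noise_pmf eta y yt = \prod_i label_noise i (yt i).
Proof. by []. Qed.

Lemma label_noise_ge0 i j : 0 <= label_noise i j.
Proof. by rewrite addr_ge0 ?mulr_ge0 ?divr_ge0 ?subr_ge0. Qed.

Lemma noise_pmf_ge0 yt : 0 <= noise_pmf eta y yt.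
Proof. by apply: prodr_ge0 => i _; exact: label_noise_ge0. Qed.

Hypothesis Y_gt0 : (0 < #|Y|)%N.

Lemma sumr_div_card (c : R) : \sum_(j : Y) c / #|Y|%:R = c.
Proof. by rewrite sumr_const -(mulr_natr (c / _)) divfK // pnatr_eq0 -lt0n. Qed.

Lemma sum_label_noise i : \sum_j label_noise i j = 1.
Proof.
rewrite big_split /= sumr_div_card -mulr_sumr (bigD1 (y i)) //= eqxx big1.
  by rewrite addr0 mulr1 subrK.
by move=> j /negbTE ->.
Qed.

Lemma sum_noise_pmf : \sum_(yt : {ffun 'I_n -> Y}) noise_pmf eta y yt = 1.
Proof.
under eq_bigr do rewrite noise_pmfE.
by rewrite -bigA_distr_bigA; apply: big1 => i _; exact: sum_label_noise.
Qed.

Lemma noise_flip_prob i0 :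
  \sum_(yt : {ffun 'I_n -> Y}) noise_pmf eta y yt * (yt i0 != y i0)%:R <= eta.
Proof.
under eq_bigr do rewrite noise_pmfE.
rewrite (@sum_ffun_prod_marginal _ _ _ label_noise i0 (fun j => (j != y i0)%:R))
  => [|i _]; last exact: sum_label_noise.
rewrite -[leRHS]sumr_div_card; apply: ler_sum => j _; rewrite /label_noise.
by case: eqP => _; rewrite ?mulr0 ?add0r ?mulr1 // divr_ge0.
Qed.

Lemma expected_hamming :
  \sum_(yt : {ffun 'I_n -> Y}) noise_pmf eta y yt * (hamming yt y)%:R <= n%:R * eta.
Proof.
under eq_bigr do rewrite natr_hamming mulr_sumr.
rewrite exchange_big /= mulr_natl -[n in eta *+ n]card_ord -sumr_const.
by apply: ler_sum => i _; exact: noise_flip_prob.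
Qed.

End LabelNoise.

Section TrainingAccuracy.
Variables (R : realType) (X : Type) (Y : finType) (n : nat).
Variables (F : set (X -> Y)) (T : ('I_n -> X) -> ('I_n -> Y) -> X -> Y).
Variables (eta : R) (s : 'I_n -> X * Y).
Hypotheses (ERM : is_ERM F T) (eta_ge0 : 0 <= eta) (eta_le1 : eta <= 1).

Lemma train_eta_cond_ge0 : 0 <= train_eta_cond eta T s.
Proof. by apply: sumr_ge0 => yt _; rewrite mulr_ge0 ?noise_pmf_ge0 ?acc_ge0. Qed.

Hypothesis Y_gt0 : (0 < #|Y|)%N.

Lemma train_cond_le : train_cond R T s <= train_eta_cond eta T s + 2 * eta.
Proof.
rewrite /train_cond /train_eta_cond; set x := xs s; set y := ys s.
have gap yt : noise_pmf eta y yt * acc R (T x y) x y <=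
    noise_pmf eta y yt * acc R (T x yt) x y +
    2 * n%:R^-1 * (noise_pmf eta y yt * (hamming yt y)%:R).
  rewrite [2 * _ * _]mulrCA -mulrDr ler_wpM2l ?noise_pmf_ge0 //.
  exact: acc_ERM_relabel_le.
rewrite -[acc _ _ _ _]mul1r -[X in X * _ <= _](sum_noise_pmf eta y Y_gt0) mulr_suml.
apply: le_trans (ler_sum _ (fun yt _ => gap yt)) _.
rewrite big_split /= -mulr_sumr lerD2l.
have [n0|n_gt0] := posnP n.
  have -> : n%:R^-1 = 0 :> R by rewrite n0 invr0.
  by rewrite mulr0 mul0r mulr_ge0.
have n_neq0 : n%:R != 0 :> R by rewrite pnatr_eq0 -lt0n.
apply: le_trans (ler_wpM2l _ (expected_hamming y eta_ge0 Y_gt0)) _.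
  by rewrite mulr_ge0 ?invr_ge0.
by rewrite mulrA -(mulrA 2) mulVf // mulr1.
Qed.

End TrainingAccuracy.

Lemma integral_sub_le_cst d (Omega : measurableType d) (R : realType)
    (P : probability Omega R) (f g : Omega -> R) (c : R) :
  measurable_fun setT f -> measurable_fun setT g ->
  (forall w, 0 <= f w) -> (forall w, 0 <= g w) -> 0 <= c ->
  (forall w, f w <= g w + c) ->
  (\int[P]_w (f w)%:E - \int[P]_w (g w)%:E <= c%:E)%E.
Proof.
move=> mf mg f_ge0 g_ge0 c_ge0 f_le.
rewrite lee_subel_addl // -[c%:E]mule1 -(probability_setT P) -integral_cst //.
rewrite -ge0_integralD //=; first last.
- exact/measurable_realfun.measurable_EFinP.
- by move=> w _; rewrite lee_fin.
apply: ge0_le_integral => //= [w _|||w _]; rewrite ?lee_fin //.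
- exact/measurable_realfun.measurable_EFinP.
- by apply: emeasurable_funD => //; exact/measurable_realfun.measurable_EFinP.
Qed.

Local Open Scope classical_set_scope.

Theorem lemmaD2 (R : realType) (X : Type) (Y : finType) (n : nat)
  (F : set (X -> Y)) (T : ('I_n -> X) -> ('I_n -> Y) -> X -> Y)
  (d : measure_display) (Omega : measurableType d) (P : probability Omega R)
  (S : Omega -> 'I_n -> X * Y) (eta : R) :
  (1 <= n)%N -> F !=set0 -> is_ERM F T ->
  0 < eta -> eta <= 1 ->
  measurable_fun setT (fun w => train_cond R T (S w)) ->
  measurable_fun setT (fun w => train_eta_cond eta T (S w)) ->
  (Order.max (Train P S T - Train_eta P S T eta) 0 <= (2 * eta)%:E)%E.
Proof.
move=> n_gt0 _ ERM /ltW eta_ge0 eta_le1 m_train m_train_eta.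
have two_eta_ge0 : 0 <= 2 * eta by rewrite mulr_ge0.
rewrite ge_max lee_fin two_eta_ge0 andbT.
apply: integral_sub_le_cst => // w.
- exact: acc_ge0.
- exact: train_eta_cond_ge0.
- apply: train_cond_le => //.
  by apply/card_gt0P; exists (ys (S w) (Ordinal n_gt0)).
Qed.
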